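(* Let $S$ be a regular ordered semigroup and $\mathcal{B}(S)$ its semigroup of bi-ideals. Let $\mathscr{R}_{\mathcal{B}(S)}$ be the Green's $\mathscr{R}$-relation of the semigroup $(\mathcal{B}(S),* )$ and let $\mathscr{R}'$ be the relation on $\mathcal{B}(S)$ given by: $A\,\mathscr{R}'\,B$ iff for each $a\in A$ there is $b\in B$ with $a\,\mathscr{R}_S\,b$ and for each $b\in B$ there is $a\in A$ with $a\,\mathscr{R}_S\,b$. Then $\mathscr{R}_{\mathcal{B}(S)}\subseteq\mathscr{R}'$.
   Context: An ordered semigroup $(S,\cdot,\leq)$ is a semigroup with a compatible partial order. For $A\subseteq S$, $(A]=\{x\in S: x\leq a\text{ for some }a\in A\}$. $S$ is regular if for each $a\in S$ there is $x\in S$ with $a\leq axa$. A nonempty $A\subseteq S$ is a bi-ideal if $ASA\subseteq A$ and $(A]=A$; $\mathcal{B}(S)$ is the set of bi-ideals with operation $A*B=(AB]$. $a\,\mathscr{R}_S\,b$ iff $(a\cup aS]=(b\cup bS]$. $\mathscr{R}_{\mathcal{B}(S)}$ is the usual Green's $\mathscr{R}$-relation of the semigroup $(\mathcal{B}(S),* )$. *)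

Set Implicit Arguments.

Record ordered_semigroup (S : Type) (mul : S -> S -> S) (le : S -> S -> Prop) : Prop := {
  os_assoc : forall a b c, mul (mul a b) c = mul a (mul b c);
  os_refl : forall a, le a a;
  os_antisym : forall a b, le a b -> le b a -> a = b;
  os_trans : forall a b c, le a b -> le b c -> le a c;
  os_compat_r : forall a b c, le a b -> le (mul a c) (mul b c);
  os_compat_l : forall a b c, le a b -> le (mul c a) (mul c b)
}.

Section Defs.
Variables (S : Type) (mul : S -> S -> S) (le : S -> S -> Prop).

Definition os_regular : Prop := forall a, exists x, le a (mul (mul a x) a).

Definition downset (A : S -> Prop) : S -> Prop := fun x => exists a, A a /\ le x a.

Definition bi_ideal (A : S -> Prop) : Prop :=
  (exists a, A a) /\
  (forall a s b, A a -> A b -> A (mul (mul a s) b)) /\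
  (forall x, A x <-> downset A x).

Definition bmul (A B : S -> Prop) : S -> Prop :=
  downset (fun x => exists a b, A a /\ B b /\ x = mul a b).

Definition R_S (a b : S) : Prop :=
  forall x, (le x a \/ exists s, le x (mul a s)) <-> (le x b \/ exists s, le x (mul b s)).

(* principal right ideal A B(S)^1 = {A} ∪ { A * X | X ∈ B(S) } in (B(S), * ) *)
Definition right_ideal_gen (A : S -> Prop) : (S -> Prop) -> Prop :=
  fun C => C = A \/ exists X, bi_ideal X /\ C = bmul A X.

Definition R_B (A B : S -> Prop) : Prop :=
  forall C, right_ideal_gen A C <-> right_ideal_gen B C.

Definition R' (A B : S -> Prop) : Prop :=
  (forall a, A a -> exists b, B b /\ R_S a b) /\
  (forall b, B b -> exists a, A a /\ R_S a b).
End Defs.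

(** If [A] and [B] generate the same principal right ideal of [B(S)] and
    [A <> B], then [A = (B X]] and [B = (A Y]] for some bi-ideals [X], [Y].
    Given [a] in [A], pick [x] with [a <= a x a] and write [a <= b0 x0],
    [b0 <= a1 y1] with [b0] in [B], [a1] in [A].  Then [b := a x b0] lies in
    [B], because [a x b0 <= (a x a1) y1] and [a x a1] is in [A]; moreover
    [b] is in [aS] and [a <= a x b0 x0 = b x0], so [a] and [b] are
    [R_S]-related.  The other half of [R'] follows by symmetry. *)

Section RegularOrderedSemigroup.
Variables (S : Type) (mul : S -> S -> S) (le : S -> S -> Prop).
Hypothesis HS : ordered_semigroup mul le.

Definition principal_right_ideal (a : S) : S -> Prop :=
  fun x => le x a \/ exists s, le x (mul a s).

Lemma R_S_refl a : R_S mul le a a.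
Proof. intros x; tauto. Qed.

Lemma R_S_sym a b : R_S mul le a b -> R_S mul le b a.
Proof. intros H x; split; apply H. Qed.

Lemma R'_refl A : R' mul le A A.
Proof. split; intros a Ha; exists a; split; auto using R_S_refl. Qed.

Lemma principal_right_ideal_sub a b t :
  le a (mul b t) ->
  forall x, principal_right_ideal a x -> principal_right_ideal b x.
Proof.
  intros Hab x [Hx | [s Hx]]; right.
  - exists t. eapply (os_trans HS); eassumption.
  - exists (mul t s). rewrite <- (os_assoc HS).
    eapply (os_trans HS); [exact Hx | exact (os_compat_r HS _ _ s Hab)].
Qed.

Lemma R_S_of_le_mul a b s t :
  le a (mul b t) -> le b (mul a s) -> R_S mul le a b.
Proof.
  intros Hab Hba x; split.
  - exact (principal_right_ideal_sub _ _ _ Hab x).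
  - exact (principal_right_ideal_sub _ _ _ Hba x).
Qed.

Hypothesis Hreg : os_regular mul le.

Lemma R_S_witness_of_mutual_bmul (A B X Y : S -> Prop) :
  (forall a s a', A a -> A a' -> A (mul (mul a s) a')) ->
  (forall a, A a -> bmul mul le B X a) ->
  (forall b, B b <-> bmul mul le A Y b) ->
  forall a, A a -> exists b, B b /\ R_S mul le a b.
Proof.
  intros HAA HA_BX HB_AY a Ha.
  destruct (Hreg a) as [x Haxa].
  destruct (HA_BX a Ha) as [p [[b0 [x0 [Hb0 [_ ->]]]] Hab0x0]].
  destruct (proj1 (HB_AY b0) Hb0) as [q [[a1 [y1 [Ha1 [Hy1 ->]]]] Hb0a1y1]].
  exists (mul (mul a x) b0); split.
  - apply HB_AY. exists (mul (mul (mul a x) a1) y1); split.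
    + exists (mul (mul a x) a1), y1. auto.
    + rewrite (os_assoc HS (mul a x) a1 y1).
      exact (os_compat_l HS _ _ _ Hb0a1y1).
  - apply R_S_of_le_mul with (s := mul x b0) (t := x0).
    + rewrite (os_assoc HS (mul a x) b0 x0).
      eapply (os_trans HS); [exact Haxa | exact (os_compat_l HS _ _ _ Hab0x0)].
    + rewrite (os_assoc HS a x b0). apply (os_refl HS).
Qed.

End RegularOrderedSemigroup.

Theorem mainTheorem5 (S : Type) (mul : S -> S -> S) (le : S -> S -> Prop)
  (HS : ordered_semigroup mul le) (Hreg : os_regular mul le)
  (A B : S -> Prop) (HA : bi_ideal mul le A) (HB : bi_ideal mul le B) :
  R_B mul le A B -> R' mul le A B.
Proof.
  intros HR.
  destruct (proj1 (HR A) (or_introl eq_refl)) as [-> | [X [_ EA]]].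
  { apply R'_refl. }
  destruct (proj2 (HR B) (or_introl eq_refl)) as [-> | [Y [_ EB]]].
  { apply R'_refl. }
  destruct HA as [_ [HAA _]], HB as [_ [HBB _]].
  split.
  - apply (@R_S_witness_of_mutual_bmul S mul le HS Hreg A B X Y HAA).
    + rewrite <- EA; auto.
    + rewrite <- EB; tauto.
  - intros b Hb.
    destruct (@R_S_witness_of_mutual_bmul S mul le HS Hreg B A Y X HBB) with b
      as [a [Ha Hba]]; auto.
    + rewrite <- EB; auto.
    + rewrite <- EA; tauto.
    + exists a; split; auto using R_S_sym.
Qed.
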